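(* Fix $x_1,\dots,x_V\in\mathcal X$ and a class $\mathcal G$ of functions $\mathcal X\to[\kappa]$. Let $\mathcal M$ be a set of $V\times\kappa$ matrices such that every $M\in\mathcal M$ satisfies $M_{t,k}\in[0,1]$ and $\sum_{k=1}^\kappa M_{t,k}\le1$ for all $t\in[V]$, $k\in[\kappa]$, and suppose $\mathcal M_{\mathcal G}\subseteq\mathcal M$, where $\mathcal M_{\mathcal G}=\{M_f:f\in\mathcal G\}$ with $(M_f)_{t,k}=\mathbf 1\{f(x_t)=k\}$. Then the relaxation $$\mathbf{Rel}(\mathcal G\mid y_{1:t})=\mathbb E_{\boldsymbol\epsilon_{t+1:V}}\Big[\sup_{M\in\mathcal M}\Big\{2\sum_{j=t+1}^V\sum_{k=1}^\kappa\boldsymbol\epsilon_{j,k}M_{j,k}+\sum_{i=1}^tM_{i,y_i}\Big\}\Big]-t$$ is admissible for prediction with respect to $\mathcal G$, where $\boldsymbol\epsilon_{t+1},\dots,\boldsymbol\epsilon_V\in\{-1,1\}^\kappa$ are vectors of independent Rademacher random variables and $\boldsymbol\epsilon_{j,k}$ is the $k$-th coordinate of $\boldsymbol\epsilon_j$. Moreover, the randomized strategy which at round $t$ draws $\boldsymbol\epsilon_{t+1:V}$ and predicts $\widehat y_t\sim\widehat q_t(\boldsymbol\epsilon_{t+1:V})$, where $$\widehat q_t(\boldsymbol\epsilon_{t+1:V})=\operatorname*{argmin}_{q\in\Delta([\kappa])}\ \sup_{y_t\in[\kappa]}\Big\{1-q[y_t]+\sup_{M\in\mathcal M}\Big\{2\sum_{j=t+1}^V\sum_{k=1}^\kappa\boldsymbol\epsilon_{j,k}M_{j,k}+\sum_{s=1}^tM_{s,y_s}\Big\}-t\Big\},$$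 satisfies, for every $t\in[V]$ and every $y_{1:t-1}$, $\max_{y_t\in[\kappa]}\{\mathbb E[\ell(\widehat y_t,y_t)]+\mathbf{Rel}(\mathcal G\mid y_{1:t})\}\le\mathbf{Rel}(\mathcal G\mid y_{1:t-1})$, the expectation being over $\boldsymbol\epsilon_{t+1:V}$ and $\widehat y_t$.
   Context: Notation: $[n]=\{1,\dots,n\}$, $a_{1:t}=(a_1,\dots,a_t)$, $\Delta(A)$ is the set of probability distributions on $A$, and for $q\in\Delta([\kappa])$, $q[y]$ is the probability of $y$. The loss is $\ell(\widehat y,y)=\mathbf 1\{\widehat y\ne y\}$, labels $y_t\in[\kappa]$. Admissibility: given fixed $x_{1:V}$ and a class $\mathcal G$ of functions $\mathcal X\to[\kappa]$, a collection of real functions $\mathbf{Rel}(\mathcal G\mid y_{1:t})$, $t=0,\dots,V$ (with $y_{1:0}=\emptyset$), is admissible if (i) for all $y_{1:V}$, $\mathbf{Rel}(\mathcal G\mid y_{1:V})\ge-\inf_{f\in\mathcal G}\sum_{t=1}^V\ell(f(x_t),y_t)$, and (ii) for all $t\in[V]$ and $y_{1:t-1}$, $\inf_{q\in\Delta([\kappa])}\sup_{y_t\in[\kappa]}\{\mathbb E_{\widehat y_t\sim q}\ell(\widehat y_t,y_t)+\mathbf{Rel}(\mathcal G\mid y_{1:t})\}\le \mathbf{Rel}(\mathcal G\mid y_{1:t-1})$. *)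

From HB Require Import structures.
From mathcomp Require Import all_boot all_order all_algebra.
From mathcomp Require Import all_classical all_reals.
Set Implicit Arguments. Unset Strict Implicit. Unset Printing Implicit Defensive.
Import Order.TTheory GRing.Theory Num.Theory.
Local Open Scope ring_scope.
Local Open Scope classical_set_scope.

Section Defs.
Variables (R : realType) (X : Type) (V kappa : nat).

Definition loss (yh y : 'I_kappa) : R := (yh != y)%:R.

Definition Delta : set ('I_kappa -> R) :=
  [set q | (forall k, 0 <= q k) /\ \sum_(k < kappa) q k = 1].

Definition exp_loss (q : 'I_kappa -> R) (y : 'I_kappa) : R :=
  \sum_(k < kappa) q k * loss k y.

(* a label sequence y_{1:V}; round s (1-based s = i+1) has label y i *)
Definition labels := 'I_V -> 'I_kappa.

Definition upd (y : labels) (t : 'I_V) (yt : 'I_kappa) : labels :=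
  fun i => if i == t then yt else y i.

Definition epsT := {ffun 'I_V * 'I_kappa -> bool}.
Definition sgn (b : bool) : R := if b then 1 else -1.

Definition Eeps (F : epsT -> R) : R :=
  (#|{: epsT}|%:R)^-1 * \sum_(e : epsT) F e.

Definition Mf (x : 'I_V -> X) (f : X -> 'I_kappa) : 'M[R]_(V, kappa) :=
  \matrix_(t, k) (f (x t) == k)%:R.

Definition good_Mset (Ms : set 'M[R]_(V, kappa)) : Prop :=
  forall M, Ms M ->
    (forall t k, 0 <= M t k <= 1) /\ (forall t, \sum_(k < kappa) M t k <= 1).

(* inner quantity, with t = number of revealed labels (labels y 0 .. y (t-1)):
   sup_{M} { 2 sum_{j = t+1..V} sum_k eps_{j,k} M_{j,k} + sum_{i=1..t} M_{i,y_i} }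
   (in 0-based indices: j >= t, i < t) *)
Definition Phi (Ms : set 'M[R]_(V, kappa)) (t : nat) (y : labels) (e : epsT) : R :=
  sup [set (2 * \sum_(j < V | (t <= j)%N) \sum_(k < kappa) sgn (e (j, k)) * M j k
            + \sum_(i < V | (i < t)%N) M i (y i)) | M in Ms].

Definition Rel (Ms : set 'M[R]_(V, kappa)) (t : nat) (y : labels) : R :=
  Eeps (Phi Ms t y) - t%:R.

(* admissibility of a relaxation Rel t y (Rel t y depends on y only through
   its first t entries for the relaxation considered here) *)
Definition admissible (x : 'I_V -> X) (G : set (X -> 'I_kappa))
    (Rl : nat -> labels -> R) : Prop :=
  (forall y : labels,
     Rl V y >= - inf [set \sum_(t < V) loss (f (x t)) (y t) | f in G]) /\
  (forall (t : 'I_V) (y : labels),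
     inf [set sup [set exp_loss q yt + Rl t.+1 (upd y t yt) | yt in [set: 'I_kappa]]
         | q in Delta]
       <= Rl t y).

Definition qobj (Ms : set 'M[R]_(V, kappa)) (t : 'I_V) (y : labels) (e : epsT)
    (q : 'I_kappa -> R) : R :=
  sup [set 1 - q yt + Phi Ms t.+1 (upd y t yt) e - (t.+1)%:R | yt in [set: 'I_kappa]].

Definition is_argmin_q (Ms : set 'M[R]_(V, kappa)) (t : 'I_V) (y : labels) (e : epsT)
    (q : 'I_kappa -> R) : Prop :=
  Delta q /\ forall q', Delta q' -> qobj Ms t y e q <= qobj Ms t y e q'.

End Defs.

From mathcomp Require Import all_boot all_order all_algebra.
From mathcomp Require Import all_classical all_reals.
From mathcomp Require Import ring lra.
Import Order.TTheory GRing.Theory Num.Theory.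
Set Implicit Arguments. Unset Strict Implicit.

Local Open Scope ring_scope.
Local Open Scope classical_set_scope.

(* Fix the signs of every row except row [t]. The inequality required at round
   [t] then asks for a distribution [q] with [q k >= Phi_{t+1}(k) - Phi_t] for
   every label [k], where [Phi_t] is averaged over the signs of row [t]; such a
   [q] exists as soon as the positive parts of these excesses sum to at most 1.
   For that, pick near-maximisers [M_k] for the labels [k] of positive excess
   and test the supremum defining [Phi_t] against the nonnegative weights
   [u_k(s) = 2 + s_k - mean_P s]: by orthogonality of the Rademacher
   coordinates this recovers the score of each [M_k] plus its entry
   [M_k t k], up to a total loss of 1 since the rows of [M_k] have mass at
   most 1. Averaging over the other rows gives admissibility, and the argmin
   strategy does at least as well as this explicit [q]. At time [V] the
   relaxation dominates minus the loss of any [f] because [M_f] is in [Ms]. *)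

Lemma card_bool_ffun_gt0 (A : finType) : (0 < #|{: {ffun A -> bool}}|)%N.
Proof. by apply/card_gt0P; exists [ffun=> true]. Qed.

Section Signs.
Variables (R : realType) (K : nat).
Local Notation signs := {ffun 'I_K -> bool}.

Lemma sgnN b : sgn R (~~ b) = - sgn R b.
Proof. by case: b; rewrite /sgn ?opprK. Qed.

Lemma sgn_mulss b : sgn R b * sgn R b = 1.
Proof. by case: b; rewrite /sgn ?mulrNN mulr1. Qed.

Lemma sgn_bound b : -1 <= sgn R b <= 1.
Proof. by case: b; rewrite /sgn; apply/andP; split; lra. Qed.

Lemma sgn_mul_le1 b (a : R) : 0 <= a <= 1 -> sgn R b * a <= 1.
Proof. by case/andP; case: b; rewrite /sgn; lra. Qed.

Definition flip_sign (l : 'I_K) (s : signs) : signs :=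
  [ffun k => if k == l then ~~ s k else s k].

Lemma flip_signK l : involutive (flip_sign l).
Proof. by move=> s; apply/ffunP=> k; rewrite !ffunE; case: eqP => // _; exact: negbK. Qed.

Lemma sum_signs_odd l (F : signs -> R) :
  (forall s, F (flip_sign l s) = - F s) -> \sum_s F s = 0.
Proof.
move=> FN; have : \sum_s F s = - \sum_s F s.
  by rewrite {1}(reindex_inj (inv_inj (flip_signK l))) (eq_bigr _ (fun s _ => FN s)) sumrN.
lra.
Qed.

Variable b : 'I_K -> bool.

Definition rsign (l : 'I_K) (s : signs) : R := sgn R (b l (+) s l).

Lemma sum_rsign l : \sum_s rsign l s = 0.
Proof. by apply: (@sum_signs_odd l) => s; rewrite /rsign ffunE eqxx addbN sgnN. Qed.

Lemma sum_rsign_mul k l :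
  \sum_s rsign k s * rsign l s = (k == l)%:R * #|{: signs}|%:R.
Proof.
have [->|neq] := eqVneq k l.
  by rewrite mul1r (eq_bigr (fun _ => 1)) ?sumr_const // => s _; rewrite sgn_mulss.
rewrite mul0r; apply: (@sum_signs_odd k) => s; rewrite /rsign !ffunE eqxx.
by rewrite eq_sym (negbTE neq) addbN sgnN mulNr.
Qed.

Variable P : {pred 'I_K}.
Hypothesis P_gt0 : (0 < #|P|)%N.
Local Notation m := (#|P|%:R : R).
Local Notation N := (#|{: signs}|%:R : R).

Lemma card_pred_gt0 : 0 < m.
Proof. by rewrite ltr0n. Qed.

Lemma sum_pred_const (c : R) : \sum_(y in P) c = c * m.
Proof. by rewrite sumr_const mulr_natr. Qed.

Definition hedge_weight (y : 'I_K) (s : signs) : R :=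
  2 + rsign y s - m^-1 * \sum_(z in P) rsign z s.

Lemma hedge_weight_ge0 y s : 0 <= hedge_weight y s.
Proof.
have avg_le1 : m^-1 * \sum_(z in P) rsign z s <= 1.
  rewrite ler_pdivrMl ?card_pred_gt0 // mulr1 -[m]mul1r -sum_pred_const.
  by apply: ler_sum => z _; case/andP: (sgn_bound (b z (+) s z)).
have /andP[ge_1 _] := sgn_bound (b y (+) s y).
rewrite /hedge_weight /rsign; lra.
Qed.

Lemma sum_hedge_weight s : \sum_(y in P) hedge_weight y s = 2 * m.
Proof.
rewrite sumrB big_split /= !sum_pred_const mulrAC mulVf ?mul1r ?addrK //.
exact: lt0r_neq0 card_pred_gt0.
Qed.

Lemma sum_signs_hedge_weight y : \sum_s hedge_weight y s = 2 * N.
Proof.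
rewrite sumrB big_split /= sum_rsign addr0 sumr_const mulr_natr -mulr_sumr.
by rewrite exchange_big /= big1 ?mulr0 ?subr0 // => z _; rewrite sum_rsign.
Qed.

Lemma sum_signs_hedge_weight_rsign y l :
  \sum_s hedge_weight y s * rsign l s = (y == l)%:R * N - m^-1 * ((l \in P)%:R * N).
Proof.
under eq_bigr do rewrite mulrBl mulrDl -mulrA mulr_suml.
rewrite sumrB big_split /= -mulr_sumr sum_rsign mulr0 add0r sum_rsign_mul.
rewrite -mulr_sumr exchange_big /=; under eq_bigr do rewrite sum_rsign_mul.
rewrite -mulr_suml big_mkcond /= (bigD1 l) //= eqxx big1 ?addr0.
  by case: (l \in P).
by move=> z /negbTE ->; case: (z \in P).
Qed.

Section HedgeBound.
Variables (C : 'I_K -> R) (v : 'I_K -> 'I_K -> R).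
Hypotheses (v_ge0 : forall y l, 0 <= v y l) (v_sum_le1 : forall y, \sum_l v y l <= 1).

Lemma sum_signs_hedge_weight_score y :
  \sum_s hedge_weight y s * (C y + 2 * \sum_l rsign l s * v y l)
  = 2 * N * C y + 2 * \sum_l v y l * ((y == l)%:R * N - m^-1 * ((l \in P)%:R * N)).
Proof.
under eq_bigr do rewrite mulrDr mulrCA mulr_sumr.
rewrite big_split /= -mulr_suml sum_signs_hedge_weight -mulr_sumr exchange_big /=.
congr (_ + 2 * _); apply: eq_bigr => l _.
by rewrite -sum_signs_hedge_weight_rsign mulr_sumr; apply: eq_bigr => s _; ring.
Qed.

Lemma hedge_correlation_ge y :
  N * (v y y - m^-1) <= \sum_l v y l * ((y == l)%:R * N - m^-1 * ((l \in P)%:R * N)).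
Proof.
have mN_ge0 : 0 <= m^-1 * N by rewrite mulr_ge0 ?invr_ge0 ?ler0n.
apply: (@le_trans _ _ (\sum_l (v y l * (y == l)%:R * N - m^-1 * N * v y l))); last first.
  apply: ler_sum => l _; have := mulr_ge0 mN_ge0 (v_ge0 y l).
  by case: (l \in P) => /=; lra.
rewrite sumrB -mulr_suml -mulr_sumr (bigD1 y) //= eqxx mulr1 big1 ?addr0; last first.
  by move=> l /negbTE; rewrite eq_sym => ->; rewrite mulr0.
have := ler_wpM2l mN_ge0 (v_sum_le1 y); rewrite mulrBr; lra.
Qed.

Lemma hedge_bound (B : signs -> R) :
  (forall y s, y \in P -> C y + 2 * \sum_l rsign l s * v y l <= B s) ->
  \sum_(y in P) (C y + v y y) - 1 <= m * (N^-1 * \sum_s B s).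
Proof.
move=> le_B; pose score y s := C y + 2 * \sum_l rsign l s * v y l.
have N_gt0 : 0 < N by rewrite ltr0n card_bool_ffun_gt0.
have upper : \sum_(y in P) \sum_s hedge_weight y s * score y s <= 2 * m * \sum_s B s.
  rewrite exchange_big /= mulr_sumr; apply: ler_sum => s _.
  apply: (@le_trans _ _ (\sum_(y in P) hedge_weight y s * B s)).
    by apply: ler_sum => y Py; rewrite ler_wpM2l ?hedge_weight_ge0 ?le_B.
  by rewrite -mulr_suml sum_hedge_weight.
have lower : 2 * N * (\sum_(y in P) (C y + v y y) - 1)
             <= \sum_(y in P) \sum_s hedge_weight y s * score y s.
  have -> : 2 * N * (\sum_(y in P) (C y + v y y) - 1)
            = \sum_(y in P) (2 * N * C y + 2 * (N * (v y y - m^-1))).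
    have sum_inv : \sum_(y in P) m^-1 = 1.
      by rewrite sum_pred_const mulVf ?lt0r_neq0 ?card_pred_gt0.
    rewrite -[X in _ - X]sum_inv -sumrB mulr_sumr.
    by apply: eq_bigr => y _; ring.
  apply: ler_sum => y _; rewrite sum_signs_hedge_weight_score lerD2l ler_pM2l //.
  exact: hedge_correlation_ge.
rewrite mulrCA ler_pdivlMl // -(ler_pM2l (_ : 0 < 2)) // !mulrA.
exact: le_trans lower upper.
Qed.

End HedgeBound.
End Signs.

Section Expectation.
Variables (R : realType) (V K : nat).
Local Notation eT := (epsT V K).
Local Notation signs := {ffun 'I_K -> bool}.

Lemma card_epsT_gt0 : 0 < (#|{: eT}|%:R : R).
Proof. by rewrite ltr0n card_bool_ffun_gt0. Qed.

Lemma EepsD (F G : eT -> R) : Eeps (fun e => F e + G e) = Eeps F + Eeps G.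
Proof. by rewrite /Eeps big_split /= mulrDr. Qed.

Lemma EepsN (F : eT -> R) : Eeps (fun e => - F e) = - Eeps F.
Proof. by rewrite /Eeps sumrN mulrN. Qed.

Lemma Eeps_cst (c : R) : Eeps (fun _ : eT => c) = c.
Proof.
rewrite /Eeps sumr_const -[c *+ _]mulr_natr mulrCA mulVf ?mulr1 //.
exact: lt0r_neq0 card_epsT_gt0.
Qed.

Lemma Eeps_sum (F : 'I_K -> eT -> R) : Eeps (fun e => \sum_k F k e) = \sum_k Eeps (F k).
Proof. by rewrite /Eeps exchange_big mulr_sumr. Qed.

Lemma ler_Eeps (F G : eT -> R) : (forall e, F e <= G e) -> Eeps F <= Eeps G.
Proof.
move=> leFG; rewrite /Eeps ler_wpM2l ?invr_ge0 ?ler0n //.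
by apply: ler_sum => e _; apply: leFG.
Qed.

Lemma Delta_Eeps (q : eT -> 'I_K -> R) :
  (forall e, Delta (q e)) -> Delta (fun k => Eeps (q ^~ k)).
Proof.
move=> Dq; split=> [k|].
  by rewrite -(Eeps_cst 0); apply: ler_Eeps => e; case: (Dq e).
rewrite -Eeps_sum -[RHS](Eeps_cst 1); congr Eeps; apply: funext => e.
by case: (Dq e).
Qed.

Definition row_xor (t : 'I_V) (e : eT) (s : signs) : eT :=
  [ffun jk => if jk.1 == t then e jk (+) s jk.2 else e jk].

Lemma row_xorK t s : involutive (row_xor t ^~ s).
Proof. by move=> e; apply/ffunP=> jk; rewrite !ffunE; case: eqP => // _; exact: addbK. Qed.

Lemma row_xor_row t e s k : row_xor t e s (t, k) = e (t, k) (+) s k.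
Proof. by rewrite ffunE /= eqxx. Qed.

Lemma row_xor_off t e s j k : j != t -> row_xor t e s (j, k) = e (j, k).
Proof. by rewrite ffunE /= => /negbTE ->. Qed.

Lemma Eeps_row_avg t (F : eT -> R) :
  Eeps F = Eeps (fun e => (#|{: signs}|%:R)^-1 * \sum_s F (row_xor t e s)).
Proof.
have signs_neq0 : (#|{: signs}|%:R : R) != 0 by rewrite pnatr_eq0 -lt0n card_bool_ffun_gt0.
rewrite {2}/Eeps -mulr_sumr exchange_big /=.
under eq_bigr => s _ do rewrite (reindex_inj (inv_inj (row_xorK t s))) /=.
under eq_bigr => s _ do under eq_bigr => e _ do rewrite row_xorK.
rewrite sumr_const -[(\sum_e F e) *+ _]mulr_natr /Eeps; congr (_ * _).
by rewrite mulrC mulfK.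
Qed.

End Expectation.

Section Simplex.
Variables (R : realType) (K : nat).

Lemma exp_loss_Delta (q : 'I_K -> R) k : Delta q -> exp_loss q k = 1 - q k.
Proof.
case=> _ <-; rewrite /exp_loss /loss (bigD1 k) //= eqxx mulr0 add0r.
rewrite [in RHS](bigD1 k) //= addrAC subrr add0r.
by apply: eq_bigr => l /negbTE ->; rewrite mulr1.
Qed.

Lemma exp_loss_ge0 (q : 'I_K -> R) k : Delta q -> 0 <= exp_loss q k.
Proof. by case=> q_ge0 _; apply: sumr_ge0 => l _; rewrite mulr_ge0 ?ler0n. Qed.

Lemma has_sup_ord (f : 'I_K -> R) (k0 : 'I_K) : has_sup [set f k | k in [set: 'I_K]].
Proof.
split; first by exists (f k0), k0.
exists (\sum_k `|f k|) => _ [k _ <-]; rewrite (bigD1 k) //= (le_trans (ler_norm _)) //.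
by rewrite lerDl sumr_ge0.
Qed.

End Simplex.

Section Relaxation.
Variables (R : realType) (V kappa : nat) (Ms : set 'M[R]_(V, kappa)).
Hypotheses (Ms_good : good_Mset Ms) (Ms_n0 : Ms !=set0).
Local Notation eT := (epsT V kappa).
Local Notation signs := {ffun 'I_kappa -> bool}.

Lemma has_sup_Phi (t : nat) (y : labels V kappa) (e : eT) :
  has_sup [set 2 * \sum_(j < V | (t <= j)%N) \sum_(k < kappa) sgn R (e (j, k)) * M j k
               + \sum_(i < V | (i < t)%N) M i (y i) | M in Ms].
Proof.
split; first by case: Ms_n0 => M MsM; eexists; exists M.
exists (2 * \sum_(j < V | (t <= j)%N) \sum_(k < kappa) 1 + \sum_(i < V | (i < t)%N) 1).
move=> _ [M MsM <-]; have [M01 _] := Ms_good MsM; apply: lerD.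
  rewrite ler_pM2l //; apply: ler_sum => j _; apply: ler_sum => k _.
  exact: sgn_mul_le1.
by apply: ler_sum => i _; case/andP: (M01 i (y i)).
Qed.

Lemma le_Phi (t : nat) (y : labels V kappa) (e : eT) M : Ms M ->
  2 * \sum_(j < V | (t <= j)%N) \sum_(k < kappa) sgn R (e (j, k)) * M j k
    + \sum_(i < V | (i < t)%N) M i (y i) <= Phi Ms t y e.
Proof. by move=> MsM; apply: sup_upper_bound (has_sup_Phi t y e) _ _; exists M. Qed.

Lemma Phi_final_ge (y : labels V kappa) (e : eT) M :
  Ms M -> \sum_i M i (y i) <= Phi Ms V y e.
Proof.
move=> /(le_Phi V y e); rewrite big_pred0 ?mulr0 ?add0r; last first.
  by move=> j; rewrite leqNgt ltn_ord.
by under eq_bigl do rewrite ltn_ord.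
Qed.

Section Round.
Variables (t : 'I_V) (y : labels V kappa).

Definition score_off (e : eT) (M : 'M[R]_(V, kappa)) : R :=
  2 * \sum_(j < V | (t < j)%N) \sum_(k < kappa) sgn R (e (j, k)) * M j k
  + \sum_(i < V | (i < t)%N) M i (y i).

Lemma score_next (e : eT) (M : 'M[R]_(V, kappa)) (k : 'I_kappa) :
  2 * \sum_(j < V | (t.+1 <= j)%N) \sum_(l < kappa) sgn R (e (j, l)) * M j l
    + \sum_(i < V | (i < t.+1)%N) M i (upd y t k i) = score_off e M + M t k.
Proof.
rewrite [X in _ + X](bigD1 t) ?ltnSn //= /upd eqxx /score_off.
under [X in _ + (_ + X)]eq_bigr => i /andP[_ /negbTE ->] do [].
under [X in _ + (_ + X)]eq_bigl => i do rewrite ltnS andbC -ltn_neqAle.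
lra.
Qed.

Lemma score_now (e : eT) (M : 'M[R]_(V, kappa)) :
  2 * \sum_(j < V | (t <= j)%N) \sum_(k < kappa) sgn R (e (j, k)) * M j k
    + \sum_(i < V | (i < t)%N) M i (y i)
  = score_off e M + 2 * \sum_(k < kappa) sgn R (e (t, k)) * M t k.
Proof.
rewrite (bigD1 t) ?leqnn //= /score_off.
under [X in _ * (_ + X)]eq_bigl => j do rewrite eq_sym andbC -ltn_neqAle.
lra.
Qed.

Lemma score_off_row_xor (e : eT) s M : score_off (row_xor t e s) M = score_off e M.
Proof.
rewrite /score_off; congr (2 * _ + _); apply: eq_bigr => j lt_tj.
apply: eq_bigr => k _; rewrite row_xor_off //.
by apply: contraTneq lt_tj => ->; rewrite ltnn.
Qed.

Definition Phi_next (k : 'I_kappa) : eT -> R := Phi Ms t.+1 (upd y t k).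

Definition Phi_row_avg (e : eT) : R :=
  (#|{: signs}|%:R)^-1 * \sum_s Phi Ms t y (row_xor t e s).

Lemma Phi_next_approx k e d : 0 < d ->
  exists2 M, Ms M & Phi_next k e - d < score_off e M + M t k.
Proof.
move=> d_gt0; have [_ [M MsM <-]] := sup_adherent d_gt0 (has_sup_Phi t.+1 (upd y t k) e).
by rewrite score_next; exists M.
Qed.

Lemma score_row_le_Phi e M : Ms M ->
  score_off e M + 2 * \sum_k sgn R (e (t, k)) * M t k <= Phi Ms t y e.
Proof. by rewrite -score_now; apply: le_Phi. Qed.

Lemma Rel_row_avgE : Rel Ms t y = Eeps (fun e => Phi_row_avg e - t%:R).
Proof. by rewrite /Rel (Eeps_row_avg t) EepsD Eeps_cst. Qed.

Definition excess (e : eT) (k : 'I_kappa) : R :=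
  if Phi_row_avg e < Phi_next k e then Phi_next k e - Phi_row_avg e else 0.

Lemma sum_excess_le1 e : \sum_k excess e k <= 1.
Proof.
pose P := [pred k | Phi_row_avg e < Phi_next k e].
have [P0|P_gt0] := posnP #|P|.
  by rewrite big1 ?ler01 // => k _; rewrite /excess ifF //; apply: (card0_eq P0).
rewrite /excess -big_mkcond /= sumrB sum_pred_const //.
have m_gt0 := card_pred_gt0 R P_gt0.
apply/ler_addgt0Pr => d d_gt0.
have near_max k : exists M : 'M[R]_(V, kappa),
    Ms M /\ Phi_next k e - d / #|P|%:R < score_off e M + M t k.
  by have [M] := Phi_next_approx k e (divr_gt0 d_gt0 m_gt0); exists M.
have [Mk MkP] := choice near_max.
have Mk_ge0 : forall k l, 0 <= Mk k t l.
  by move=> k l; have [/(_ t l)/andP[]] := Ms_good (MkP k).1.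
have Mk_le1 : forall k, \sum_l Mk k t l <= 1.
  by move=> k; exact: (Ms_good (MkP k).1).2.
have score_le : forall k s, k \in P ->
    score_off e (Mk k) + 2 * \sum_l rsign R (fun l => e (t, l)) l s * Mk k t l
    <= Phi Ms t y (row_xor t e s).
  move=> k s _; rewrite -(score_off_row_xor e s).
  under eq_bigr do rewrite /rsign -row_xor_row.
  exact: score_row_le_Phi (MkP k).1.
have := hedge_bound P_gt0 Mk_ge0 Mk_le1 score_le.
have : \sum_(k in P) Phi_next k e
       <= \sum_(k in P) (score_off e (Mk k) + Mk k t k) + d.
  rewrite -[d](divfK (lt0r_neq0 m_gt0)) -sum_pred_const -big_split.
  by apply: ler_sum => k _ /=; have := (MkP k).2; lra.
rewrite /Phi_row_avg; lra.
Qed.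

Definition hedge_q (e : eT) (k : 'I_kappa) : R :=
  excess e k + (1 - \sum_l excess e l) / kappa%:R.

Lemma excess_ge0 e k : 0 <= excess e k.
Proof. by rewrite /excess; case: ifP => // /ltW; rewrite subr_ge0. Qed.

Lemma hedge_q_Delta e : (0 < kappa)%N -> Delta (hedge_q e).
Proof.
move=> kappa_gt0; have rest_ge0 : 0 <= (1 - \sum_l excess e l) / kappa%:R.
  by rewrite divr_ge0 ?ler0n // subr_ge0 sum_excess_le1.
split=> [k|]; first by rewrite addr_ge0 ?excess_ge0.
rewrite big_split /= sumr_const card_ord -[_ / _ *+ _]mulr_natr divfK ?pnatr_eq0 -?lt0n //.
by rewrite addrC subrK.
Qed.

Lemma Phi_next_le_hedge_q e k : Phi_next k e - Phi_row_avg e <= hedge_q e k.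
Proof.
have rest_ge0 : 0 <= (1 - \sum_l excess e l) / kappa%:R.
  by rewrite divr_ge0 ?ler0n // subr_ge0 sum_excess_le1.
rewrite /hedge_q /excess; case: ltP => ?; lra.
Qed.

Lemma Eeps_Rel_step_le (L : eT -> R) k :
  (forall e, L e + Phi_next k e <= Phi_row_avg e + 1) ->
  Eeps L + Rel Ms t.+1 (upd y t k) <= Rel Ms t y.
Proof.
move=> leL; have : Eeps (fun e => L e + Phi_next k e - t.+1%:R)
                  <= Eeps (fun e => Phi_row_avg e - t%:R).
  by apply: ler_Eeps => e; have := leL e; rewrite -natr1; lra.
by rewrite Rel_row_avgE /Rel !EepsD !Eeps_cst; lra.
Qed.

End Round.

Lemma Rel_final_ge (X : Type) (x : 'I_V -> X) (G : set (X -> 'I_kappa)) :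
  G !=set0 -> (forall f, G f -> Ms (Mf R x f)) ->
  forall y : labels V kappa,
    - inf [set \sum_(i < V) loss R (f (x i)) (y i) | f in G] <= Rel Ms V y.
Proof.
move=> G_n0 MsG y; rewrite lerNl /Rel opprB.
apply: lb_le_inf; first by case: G_n0 => f Gf; eexists; exists f.
move=> _ [f Gf <-].
have -> : \sum_i loss R (f (x i)) (y i) = V%:R - \sum_i Mf R x f i (y i).
  rewrite -[V in V%:R]card_ord -sumr_const -sumrB; apply: eq_bigr => i _.
  by rewrite /loss /Mf mxE; case: eqP; rewrite ?subrr ?subr0.
rewrite lerD2l lerN2 -[X in X <= _](Eeps_cst V kappa).
by apply: ler_Eeps => e; apply: Phi_final_ge; apply: MsG.
Qed.

Lemma qobj_ge (t : 'I_V) (y : labels V kappa) e q k :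
  1 - q k + Phi_next t y k e - t.+1%:R <= qobj Ms t y e q.
Proof. by apply: sup_upper_bound (has_sup_ord _ k) _ _; exists k. Qed.

Lemma qobj_hedge_q_le (t : 'I_V) (y : labels V kappa) e :
  qobj Ms t y e (hedge_q t y e) <= Phi_row_avg t y e - t%:R.
Proof.
apply: ge_sup; first by exists (1 - hedge_q t y e (y t) + Phi_next t y (y t) e - t.+1%:R), (y t).
move=> _ [k _ <-]; have := Phi_next_le_hedge_q t y e k.
by rewrite /Phi_next -natr1; lra.
Qed.

Lemma Rel_step (t : 'I_V) (y : labels V kappa) :
  inf [set sup [set exp_loss q k + Rel Ms t.+1 (upd y t k) | k in [set: 'I_kappa]]
        | q in @Delta R kappa] <= Rel Ms t y.
Proof.
have kappa_gt0 : (0 < kappa)%N by apply: leq_ltn_trans (ltn_ord (y t)).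
pose q k := Eeps (hedge_q t y ^~ k).
have Dq : Delta q by apply: Delta_Eeps => e; apply: hedge_q_Delta.
apply: (@le_trans _ _ (sup [set exp_loss q k + Rel Ms t.+1 (upd y t k) | k in [set: 'I_kappa]])).
  apply: ge_inf; last by exists q.
  exists (Rel Ms t.+1 (upd y t (y t))) => _ [q' Dq' <-].
  apply: (@le_trans _ _ (exp_loss q' (y t) + Rel Ms t.+1 (upd y t (y t)))).
    by rewrite lerDr exp_loss_ge0.
  by apply: sup_upper_bound (has_sup_ord _ (y t)) _ _; exists (y t).
apply: ge_sup; first by eexists; exists (y t).
move=> _ [k _ <-]; rewrite exp_loss_Delta // /q.
rewrite -[1](Eeps_cst V kappa) -EepsN -EepsD.
apply: Eeps_Rel_step_le => e; have := Phi_next_le_hedge_q t y e k; lra.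
Qed.

Lemma argmin_strategy_step (t : 'I_V) (y : labels V kappa) (qhat : epsT V kappa -> 'I_kappa -> R) :
  (forall e, is_argmin_q Ms t y e (qhat e)) ->
  sup [set Eeps (fun e => exp_loss (qhat e) k) + Rel Ms t.+1 (upd y t k)
       | k in [set: 'I_kappa]] <= Rel Ms t y.
Proof.
move=> qhat_min; have kappa_gt0 : (0 < kappa)%N by apply: leq_ltn_trans (ltn_ord (y t)).
apply: ge_sup; first by eexists; exists (y t).
move=> _ [k _ <-]; apply: Eeps_Rel_step_le => e.
have [Dqhat qhat_le] := qhat_min e.
have := le_trans (qobj_ge t y e (qhat e) k)
  (le_trans (qhat_le _ (hedge_q_Delta t y e kappa_gt0)) (qobj_hedge_q_le t y e)).
by rewrite exp_loss_Delta // -natr1; lra.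
Qed.

End Relaxation.

Theorem lemma2 (R : realType) (X : Type) (V kappa : nat)
    (x : 'I_V -> X) (G : set (X -> 'I_kappa)) (Ms : set 'M[R]_(V, kappa)) :
  G !=set0 ->
  good_Mset Ms ->
  (forall f, G f -> Ms (Mf R x f)) ->
  admissible x G (Rel Ms) /\
  (forall (t : 'I_V) (y : labels V kappa) (qhat : epsT V kappa -> 'I_kappa -> R),
     (forall e, is_argmin_q Ms t y e (qhat e)) ->
     sup [set Eeps (fun e => exp_loss (qhat e) yt) + Rel Ms t.+1 (upd y t yt)
         | yt in [set: 'I_kappa]]
       <= Rel Ms t y).
Proof.
move=> G_n0 Ms_good MsG.
have Ms_n0 : Ms !=set0 by case: G_n0 => f /MsG; exists (Mf R x f).
split; first split.
- exact: Rel_final_ge.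
- exact: Rel_step.
- exact: argmin_strategy_step.
Qed.
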